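(* Let $n\ge 4$, $N=\{1,\dots,n\}$, fix $i_1\in N$ and let $\hat N^c=N\setminus\{i_1\}$. Then the inequality $$\sum_{j\in\hat N^c}\left(x_{i_1j}+x_{ji_1}\right)-\sum_{j,j'\in\hat N^c:\,j\ne j'} x_{jj'}\le 2-\frac{(n-2)(n-3)}{2}$$ defines a facet of the weak order polytope $P^n_{WO}$.
   Context: Let $N=\{1,\dots,n\}$ and $A_N=\{(i,j): i,j\in N, i\ne j\}$. A weak order on $N$ is a binary relation $W\subseteq N\times N$ that is reflexive, transitive and total; $(i,j)\in W$ is read ''$i$ is preferred over or tied with $j$''. The characteristic vector of $W$ is $x^W\in\{0,1\}^{A_N}$ with $x^W_{(i,j)}=1$ if $(i,j)\in W$ and $0$ otherwise. The weak order polytope $P^n_{WO}$ is the convex hull of the characteristic vectors of all weak orders on $N$; its points are vectors $x\in\mathbb{R}^{A_N}$ and $x_{ij}$ denotes the coordinate $x_{(i,j)}$. $P^n_{WO}$ has dimension $n(n-1)$. An inequality $\pi x\le\pi_0$ defines a facet of a polytope $P$ if it is valid for $P$ (holds for all $x\in P$) and the face $P\cap\{x:\pi x=\pi_0\}$ is nonempty, proper, and contains $\dim(P)$ affinely independent points (i.e. has dimension $\dim(P)-1$). *)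

From mathcomp Require Import all_boot all_order all_algebra.
Set Implicit Arguments. Unset Strict Implicit. Unset Printing Implicit Defensive.
Import Order.TTheory GRing.Theory Num.Theory.
Local Open Scope ring_scope.

(* N = {1..n} is modelled by 'I_n = {0..n-1}. *)

Definition arc (n : nat) := {p : 'I_n * 'I_n | p.1 != p.2}.

Definition vec (R : Type) (n : nat) := arc n -> R.

(* x_{ij} for i <> j (0 when i = j, never used there) *)
Definition xc (R : pzRingType) (n : nat) (x : vec R n) (i j : 'I_n) : R :=
  match insub (i, j) : option (arc n) with Some a => x a | None => 0 end.

Definition weak_order (n : nat) (W : rel 'I_n) : Prop :=
  reflexive W /\ transitive W /\ total W.

Definition charvec (R : pzRingType) (n : nat) (W : rel 'I_n) : vec R n :=
  fun a => if W (val a).1 (val a).2 then 1 else 0.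

Definition P_WO (R : realFieldType) (n : nat) (x : vec R n) : Prop :=
  exists (k : nat) (lam : 'I_k -> R) (W : 'I_k -> rel 'I_n),
    (forall t, weak_order (W t)) /\ (forall t, 0 <= lam t) /\
    \sum_(t < k) lam t = 1 /\
    (forall a, x a = \sum_(t < k) lam t * charvec R (W t) a).

Definition aff_indep (R : pzRingType) (n m : nat) (y : 'I_m -> vec R n) : Prop :=
  forall mu : 'I_m -> R,
    \sum_(t < m) mu t = 0 ->
    (forall a, \sum_(t < m) mu t * y t a = 0) ->
    forall t, mu t = 0.

(* "f x <= b defines a facet of P", where P has dimension d and f is the
   (linear) left-hand side of the inequality. *)
Definition is_facet (R : realFieldType) (n : nat) (P : vec R n -> Prop) (d : nat)
  (f : vec R n -> R) (b : R) : Prop :=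
  (forall x, P x -> f x <= b) /\
  (exists x, P x /\ f x = b) /\
  (exists x, P x /\ f x != b) /\
  (exists y : 'I_d -> vec R n,
      (forall t, P (y t) /\ f (y t) = b) /\ aff_indep y).

Definition lhs7 (R : pzRingType) (n : nat) (i1 : 'I_n) (x : vec R n) : R :=
  \sum_(j < n | j != i1) (xc x i1 j + xc x j i1)
  - \sum_(j < n | j != i1) \sum_(j' < n | (j' != i1) && (j' != j)) xc x j j'.

(* Let S = N \ {i1}. For any pivot j0 in S the left-hand side splits as
     x_{i1 j0} + x_{j0 i1} + sum_{j in S-j0} ((x_{i1 j} + x_{j i1}) - (x_{j0 j} + x_{j j0}))
     - sum of x_{j j'} over ordered pairs of S - j0.
   At a weak order every unordered pair of S - j0 contributes at least 1 to the last sum, so it is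
   at least (n-2)(n-3)/2. If some j0 is tied with i1, transitivity makes every difference vanish
   and the first two terms add up to at most 2; otherwise x_{i1 j} + x_{j i1} = 1 for all j, every
   difference is nonpositive and the first two terms add up to 1. Validity on the polytope follows
   by convexity.
   A rank function tying i1 with some j and injective on S - j gives a point on the face. For
   distinct j, a in S, the orders "i1 ~ j ~ a on top", "i1 ~ j above a" and "a above i1 ~ j" (the
   rest strictly below) are such points, and their characteristic vectors differ by
   e_{a i1} + e_{a j} and e_{i1 a} + e_{j a}. So every affine equation valid on the face has
   coefficients with w_{a i1} = - w_{a j} and w_{i1 a} = - w_{j a}; with three elements in S this
   forces w to be a multiple of the coefficient vector of the inequality. The matrix of the rows
   (1, x) over the tight points thus has corank at most one, and n(n-1) of its independent rows
   are affinely independent tight points. *)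

From Pilot Require Import Defs.
From mathcomp Require Import all_boot all_order all_algebra.
From mathcomp Require Import ring lra zify.
Set Implicit Arguments. Unset Strict Implicit. Unset Printing Implicit Defensive.
Import Order.TTheory GRing.Theory Num.Theory.
Local Open Scope ring_scope.

Section OrderedPairs.
Variables (R : numFieldType) (I : finType) (P : pred I).

Definition pair_sum (F : I -> I -> R) : R :=
  \sum_(j | P j) \sum_(j' | P j' && (j' != j)) F j j'.

Lemma pair_sumC F : pair_sum F = pair_sum (fun j j' => F j' j).
Proof.
rewrite /pair_sum (exchange_big_dep P) /=; last by move=> i j _ /andP[].
apply: eq_bigr => j Pj; apply: eq_bigl => i.
by rewrite Pj eq_sym.
Qed.

Lemma pair_sum_sym F : pair_sum F *+ 2 = pair_sum (fun j j' => F j j' + F j' j).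
Proof.
by rewrite mulr2n [X in _ + X]pair_sumC /pair_sum -big_split; under eq_bigr do rewrite -big_split.
Qed.

Lemma pair_sum1 : pair_sum (fun _ _ => 1) = (#|P| * (#|P| - 1))%:R.
Proof.
have card_P1 j : P j -> #|[pred j' | P j' && (j' != j)]| = (#|P| - 1)%N.
  move=> Pj; rewrite (cardD1 j P) [j \in P]Pj add1n subSS subn0.
  by apply: eq_card => i; rewrite !inE andbC.
rewrite /pair_sum (eq_bigr (fun _ => (#|P| - 1)%:R)) => [|j Pj]; last first.
  by rewrite sumr_const card_P1.
by rewrite sumr_const -mulrnA mulnC.
Qed.

Lemma pair_sum_ge F :
  (forall u v, P u -> P v -> u != v -> 1 <= F u v + F v u) ->
  (#|P| * (#|P| - 1))%:R / 2 <= pair_sum F.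
Proof.
move=> F_ge; rewrite ler_pdivrMr // mulr_natr pair_sum_sym -pair_sum1.
by apply: ler_sum => j Pj; apply: ler_sum => j' /andP[Pj' j'j]; apply: F_ge; rewrite // eq_sym.
Qed.

Lemma pair_sum_eq F :
  (forall u v, P u -> P v -> u != v -> F u v + F v u = 1) ->
  pair_sum F = (#|P| * (#|P| - 1))%:R / 2.
Proof.
move=> F_eq; rewrite -[LHS](@mulfK _ 2) ?pnatr_eq0 // mulr_natr pair_sum_sym -pair_sum1.
congr (_ / 2); apply: eq_bigr => j Pj; apply: eq_bigr => j' /andP[Pj' j'j].
by apply: F_eq; rewrite // eq_sym.
Qed.

End OrderedPairs.

Section CharacteristicVectors.
Variables (R : realFieldType) (n : nat).
Implicit Types (x : vec R n) (W : rel 'I_n) (u v : 'I_n).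

Lemma xcE x u v (uv : (u, v).1 != (u, v).2) : xc x u v = x (exist _ (u, v) uv).
Proof. by rewrite /xc insubT. Qed.

Lemma xc_charvec W u v : u != v -> xc (charvec R W) u v = if W u v then 1 else 0.
Proof. by move=> uv; rewrite (xcE _ uv). Qed.

Lemma xc_charvec_le1 W u v : xc (charvec R W) u v <= 1.
Proof. by rewrite /xc; case: insub => // a; rewrite /charvec; case: ifP. Qed.

Lemma xc_combination x k (lam : 'I_k -> R) (y : 'I_k -> vec R n) :
  (forall a, x a = \sum_(t < k) lam t * y t a) ->
  forall u v, xc x u v = \sum_(t < k) lam t * xc (y t) u v.
Proof.
move=> xE u v; rewrite /xc; case: insub => [a|]; first exact: xE.
by rewrite big1 // => t _; rewrite mulr0.
Qed.

Lemma charvec_P_WO W : weak_order W -> P_WO (charvec R W).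
Proof.
move=> W_wo; exists 1%N, (fun _ => 1), (fun _ => W).
split=> [//|]; split=> [_|]; first exact: ler01.
by split=> [|a]; rewrite big_ord1 ?mul1r.
Qed.

Lemma xc_weak_order_pair_ge1 W u v : weak_order W -> u != v ->
  1 <= xc (charvec R W) u v + xc (charvec R W) v u.
Proof.
move=> [_ [_ W_tot]] uv; have vu : v != u by rewrite eq_sym.
rewrite !xc_charvec //.
by case/orP: (W_tot u v) => ->; case: (W _ _); rewrite ?addr0 ?add0r ?lerDl.
Qed.

Definition rank_order (f : 'I_n -> nat) : rel 'I_n := fun u v => (f v <= f u)%N.

Lemma rank_order_weak f : weak_order (rank_order f).
Proof.
split; first by move=> u; exact: leqnn.
split; first by move=> v u w uv vw; exact: leq_trans vw uv.
by move=> u v; exact: leq_total.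
Qed.

Lemma xc_rank_order f u v : u != v ->
  xc (charvec R (rank_order f)) u v = if (f v <= f u)%N then 1 else 0.
Proof. exact: xc_charvec. Qed.

Lemma xc_rank_order_pair f u v : u != v -> f u != f v ->
  xc (charvec R (rank_order f)) u v + xc (charvec R (rank_order f)) v u = 1.
Proof.
move=> uv fuv; have vu : v != u by rewrite eq_sym.
by rewrite !xc_rank_order //; case: ltngtP fuv => // _ _; rewrite ?addr0 ?add0r.
Qed.

End CharacteristicVectors.

Section Pivot.
Variables (R : realFieldType) (n : nat) (i1 : 'I_n).
Implicit Types (x : vec R n).

Definition others (j0 : 'I_n) : pred 'I_n := [pred j | (j != i1) && (j != j0)].

Definition pivot_part x (j0 : 'I_n) : R :=
  xc x i1 j0 + xc x j0 i1
  + \sum_(j | others j0 j) (xc x i1 j + xc x j i1 - (xc x j0 j + xc x j j0)).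

Definition facet_rhs : R := 2 - ((n - 2) * (n - 3))%:R / 2.

Lemma lhs7_pivot x (j0 : 'I_n) : j0 != i1 ->
  lhs7 i1 x = pivot_part x j0 - pair_sum (others j0) (xc x).
Proof.
move=> j0i1; rewrite /lhs7 /pivot_part /pair_sum (bigD1 j0) //.
rewrite [in X in _ - X](bigD1 j0) //=.
under [in X in _ - (_ + X)]eq_bigr => j /andP[ji1 jj0].
  rewrite (bigD1 j0) /=; last by rewrite j0i1 eq_sym.
  under eq_bigl => j' do rewrite -andbA [(j' != j) && _]andbC andbA.
  over.
by rewrite /others /= !big_split sumrN big_split /=; ring.
Qed.

Lemma others_pair_count (j0 : 'I_n) : j0 != i1 ->
  (#|others j0| * (#|others j0| - 1))%N = ((n - 2) * (n - 3))%N.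
Proof.
move=> j0i1; have := cardD1 j0 (predC1 i1); rewrite cardC1 card_ord inE /= j0i1.
have -> : #|[predD1 predC1 i1 & j0]| = #|others j0|.
  by apply: eq_card => j; rewrite !inE andbC.
move=> /= card_C1; have -> : #|others j0| = (n - 2)%N by lia.
by rewrite -subnDA.
Qed.

Lemma weak_order_pivot_le W (j1 : 'I_n) : weak_order W -> j1 != i1 ->
  exists2 j0, j0 != i1 & pivot_part (charvec R W) j0 <= 2.
Proof.
move=> W_wo j1i1; have [_ [W_tr W_tot]] := W_wo; set x := charvec R W.
have xE u v : u != v -> xc x u v = if W u v then 1 else 0 := @xc_charvec R n W u v.
case: (pickP [pred j | (j != i1) && W i1 j && W j i1]) => [j0 | no_tie].
  case/andP=> /andP[j0i1 W_i1j0] W_j0i1; exists j0; first exact: j0i1.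
  have head_le : xc x i1 j0 + xc x j0 i1 <= 2.
    by have := xc_charvec_le1 R W i1 j0; have := xc_charvec_le1 R W j0 i1; lra.
  rewrite /pivot_part big1 ?addr0 // => j /andP[ji1 jj0].
  have i1j : i1 != j by rewrite eq_sym.
  have j0j : j0 != j by rewrite eq_sym.
  rewrite !xE //.
  have -> : W i1 j = W j0 j.
    by apply/idP/idP => [|W_j0j]; [exact: W_tr W_j0i1 | exact: W_tr W_i1j0 W_j0j].
  have -> : W j i1 = W j j0.
    by apply/idP/idP => W_j; [exact: W_tr W_j W_i1j0 | exact: W_tr W_j W_j0i1].
  by rewrite subrr.
have x_eq1 j : j != i1 -> xc x i1 j + xc x j i1 = 1.
  move=> ji1; have i1j : i1 != j by rewrite eq_sym.
  have := no_tie j; rewrite /= ji1 !xE //.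
  by case/orP: (W_tot i1 j) => ->; case: (W _ _); rewrite ?addr0 ?add0r.
exists j1; first exact: j1i1.
rewrite /pivot_part x_eq1 //.
have mid_le0 : \sum_(j | others j1 j) (xc x i1 j + xc x j i1 - (xc x j1 j + xc x j j1)) <= 0.
  apply: sumr_le0 => j /andP[ji1 jj1]; rewrite x_eq1 // subr_le0.
  by apply: xc_weak_order_pair_ge1; rewrite // eq_sym.
lra.
Qed.

Lemma lhs7_weak_order_le W (j1 : 'I_n) : weak_order W -> j1 != i1 ->
  lhs7 i1 (charvec R W) <= facet_rhs.
Proof.
move=> W_wo j1i1; have [j0 j0i1 pivot_le] := weak_order_pivot_le W_wo j1i1.
have pairs_ge := pair_sum_ge (P := others j0) (fun u v _ _ => xc_weak_order_pair_ge1 R W_wo).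
rewrite (lhs7_pivot _ j0i1) /facet_rhs -(others_pair_count j0i1); lra.
Qed.

Lemma lhs7_rank_order f (j0 : 'I_n) : j0 != i1 -> {in others j0 &, injective f} ->
  lhs7 i1 (charvec R (rank_order f))
  = pivot_part (charvec R (rank_order f)) j0 - ((n - 2) * (n - 3))%:R / 2.
Proof.
move=> j0i1 f_inj; rewrite (lhs7_pivot _ j0i1) -(others_pair_count j0i1).
rewrite pair_sum_eq // => u v Pu Pv uv.
apply: xc_rank_order_pair => //; apply: contra uv => /eqP fuv.
by apply/eqP; apply: f_inj.
Qed.

Lemma lhs7_tied_rank_order f (j0 : 'I_n) : j0 != i1 -> {in others j0 &, injective f} ->
  f i1 = f j0 -> lhs7 i1 (charvec R (rank_order f)) = facet_rhs.
Proof.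
move=> j0i1 f_inj f_tie; rewrite (lhs7_rank_order j0i1 f_inj) /pivot_part /facet_rhs.
have i1j0 : i1 != j0 by rewrite eq_sym.
rewrite big1 => [|j /andP[ji1 jj0]]; last first.
  have i1j : i1 != j by rewrite eq_sym.
  have j0j : j0 != j by rewrite eq_sym.
  by rewrite !xc_rank_order // f_tie subrr.
by rewrite !xc_rank_order // f_tie leqnn addr0.
Qed.

Lemma lhs7_strict_rank_order f (j0 : 'I_n) : j0 != i1 -> injective f ->
  lhs7 i1 (charvec R (rank_order f)) = facet_rhs - 1.
Proof.
move=> j0i1 f_inj; rewrite (lhs7_rank_order j0i1 (in2W f_inj)) /pivot_part /facet_rhs.
have f_neq u v : u != v -> f u != f v by move=> uv; rewrite (inj_eq f_inj).
have i1j0 : i1 != j0 by rewrite eq_sym.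
rewrite big1 => [|j /andP[ji1 jj0]]; last first.
  have i1j : i1 != j by rewrite eq_sym.
  have j0j : j0 != j by rewrite eq_sym.
  by rewrite !xc_rank_order_pair ?f_neq // subrr.
rewrite xc_rank_order_pair ?f_neq //; lra.
Qed.

Lemma lhs7_combination x k (lam : 'I_k -> R) (y : 'I_k -> vec R n) :
  (forall a, x a = \sum_(t < k) lam t * y t a) ->
  lhs7 i1 x = \sum_(t < k) lam t * lhs7 i1 (y t).
Proof.
move=> /xc_combination xE; rewrite /lhs7.
under eq_bigr => j _ do rewrite !xE -big_split.
under [in X in _ - X]eq_bigr => j _ do under eq_bigr => j' _ do rewrite xE.
under [RHS]eq_bigr => t _ do rewrite mulrBr !mulr_sumr.
rewrite sumrB exchange_big; congr (_ - _).
  by apply: eq_bigr => t _; apply: eq_bigr => j _; rewrite mulrDr.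
rewrite [RHS]exchange_big; apply: eq_bigr => j _.
under [RHS]eq_bigr do rewrite mulr_sumr.
by rewrite [RHS]exchange_big; apply: eq_bigr.
Qed.

Lemma P_WO_lhs7_le x (j1 : 'I_n) : j1 != i1 -> P_WO x -> lhs7 i1 x <= facet_rhs.
Proof.
move=> j1i1 [k [lam [W [W_wo [lam_ge0 [lam_sum1 xE]]]]]].
rewrite (lhs7_combination xE) -[facet_rhs]mul1r -lam_sum1 mulr_suml.
by apply: ler_sum => t _; apply: ler_wpM2l => //; exact: lhs7_weak_order_le (W_wo t) j1i1.
Qed.

End Pivot.

Section Raise.
Variables (R : realFieldType) (n : nat) (f g : 'I_n -> nat) (m : nat) (S : pred 'I_n).
Hypotheses (f_le : forall k, (f k <= m)%N) (f_S : forall k, S k -> f k = m)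
  (g_raise : forall k, g k = (f k + S k)%N).

Lemma charvec_rank_order_raise (e : Defs.arc n) :
  charvec R (rank_order f) e - charvec R (rank_order g) e
  = (S (val e).2 && (f (val e).1 == m) && ~~ S (val e).1)%:R.
Proof.
rewrite /charvec /rank_order !g_raise; case: (val e) => u v /=.
have fu := f_le u; have fv := f_le v.
case Su: (S u); case Sv: (S v); rewrite /= ?addn0 ?addn1.
- by rewrite ltnS subrr andbF.
- by rewrite (f_S Su) fv (leqW fv) subrr.
- by rewrite (f_S Sv) ltnNge fu subr0 andbT eqn_leq fu; case: leqP.
- by rewrite subrr.
Qed.
End Raise.

Section TieRanks.
Variables (R : realFieldType) (n : nat) (i1 j a : 'I_n).

Definition tie_rank (bp ba : bool) (k : 'I_n) : nat :=
  if (k == i1) || (k == j) then (n + bp)%N else if k == a then (n + ba)%N else k.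

Lemma tie_rank_inj bp ba : {in others i1 j &, injective (tie_rank bp ba)}.
Proof.
move=> u v /andP[/negPf ui1 /negPf uj] /andP[/negPf vi1 /negPf vj].
rewrite /tie_rank ui1 uj vi1 vj /=; have := ltn_ord u; have := ltn_ord v.
by case: eqP => [->|_]; case: eqP => [->|_] // *; [lia | lia | exact: val_inj].
Qed.

Lemma lhs7_tie_rank bp ba : j != i1 ->
  lhs7 i1 (charvec R (rank_order (tie_rank bp ba))) = facet_rhs R n.
Proof.
move=> ji1; apply: (lhs7_tied_rank_order R ji1); first exact: tie_rank_inj.
by rewrite /tie_rank !eqxx orbT.
Qed.

Lemma tie_rank_top u : (tie_rank false false u == n) = ((u == i1) || (u == j)) || (u == a).
Proof.
rewrite /tie_rank !addn0; case: ((u == i1) || (u == j)); rewrite ?eqxx //.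
by case: (u == a); rewrite ?eqxx // ltn_eqF.
Qed.

Hypotheses (i1j : i1 != j) (ai1 : a != i1) (aj : a != j).

Lemma charvec_tie_rank_lower (e : Defs.arc n) :
  charvec R (rank_order (tie_rank false false)) e - charvec R (rank_order (tie_rank true false)) e
  = (val e == (a, i1))%:R + (val e == (a, j))%:R.
Proof.
rewrite (@charvec_rank_order_raise _ _ _ _ n (fun k => (k == i1) || (k == j))); first last.
- by move=> k; rewrite /tie_rank; case: ifP; rewrite ?addn0.
- by move=> k Sk; rewrite /tie_rank Sk addn0.
- by move=> k; rewrite /tie_rank !addn0; case: ifP => _ //; case: ifP => _ //; exact: ltnW.
case: e => [[u v] /= _]; rewrite tie_rank_top !xpair_eqE.
have [->|ua] := eqVneq u a; last first.
  by case: ((u == i1) || (u == j)); rewrite /= ?andbF ?addr0.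
rewrite (negPf ai1) (negPf aj) /= !andbT.
by case: (eqVneq v i1) => [->|]; rewrite ?eqxx ?(negPf i1j) ?addr0 ?add0r.
Qed.

Lemma charvec_tie_rank_raise (e : Defs.arc n) :
  charvec R (rank_order (tie_rank false false)) e - charvec R (rank_order (tie_rank false true)) e
  = (val e == (i1, a))%:R + (val e == (j, a))%:R.
Proof.
rewrite (@charvec_rank_order_raise _ _ _ _ n (pred1 a)); first last.
- move=> k; rewrite /tie_rank /=; case: ifP => [k_pair|_]; last by case: eqP; rewrite ?addn0.
  suff /negPf-> : k != a by rewrite !addn0.
  by apply: contraTneq k_pair => ->; rewrite negb_or ai1.
- by move=> k /eqP->; rewrite /tie_rank (negPf ai1) (negPf aj) eqxx addn0.
- by move=> k; rewrite /tie_rank !addn0; case: ifP => _ //; case: ifP => _ //; exact: ltnW.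
case: e => [[u v] /= _]; rewrite tie_rank_top !xpair_eqE.
case: (v == a); last by rewrite /= !andbF addr0.
rewrite !andbT; have [->|ua] := eqVneq u a; first by rewrite andbF (negPf ai1) (negPf aj) addr0.
by rewrite orbF andbT; case: (eqVneq u i1) => [->|]; rewrite ?eqxx ?(negPf i1j) ?addr0 ?add0r.
Qed.

End TieRanks.

Section AffineIndependence.
Variables (R : fieldType) (T K : finType) (pt : K -> T -> R).

Lemma row_free_rowsub m p d (A : 'M[R]_(m, p)) (g : 'I_d -> 'I_m) :
  injective g -> row_free A -> row_free (rowsub g A).
Proof.
move=> g_inj A_free; apply: inj_row_free => v; rewrite rowsubE mulmxA => /eqP.
rewrite mulmx_free_eq0 // => /eqP v0; apply/rowP => t.
move/rowP/(_ (g t)): v0; rewrite !mxE => v0; rewrite -[RHS]v0.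
rewrite (bigD1 t) //= !mxE eqxx mulr1 big1 ?addr0 // => s st.
by rewrite !mxE (inj_eq g_inj) (negPf st) mulr0.
Qed.

Definition point_mx : 'M[R]_(#|K|, 1 + #|T|) :=
  row_mx (const_mx 1) (\matrix_(k, i) pt (enum_val k) (enum_val i)).

Lemma point_mx_ker (z : 'rV[R]_(1 + #|T|)) : z *m point_mx^T = 0 ->
  forall k, lsubmx z 0 0 + \sum_e rsubmx z 0 (enum_rank e) * pt k e = 0.
Proof.
rewrite -[z]hsubmxK tr_row_mx mul_row_col row_mxKl row_mxKr => z0 k.
move/rowP/(_ (enum_rank k)): z0; rewrite !mxE => z0; rewrite -[RHS]z0.
rewrite big_ord1 !mxE mulr1; congr (_ + _).
rewrite [RHS](reindex enum_rank) /=; last by apply: onW_bij; exact: enum_rank_bij.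
by apply: eq_bigr => e _; rewrite !mxE !enum_rankK.
Qed.

Variables (k0 : K) (c : T -> R).
Hypothesis affine_eq_multiple : forall (z0 : R) (w : T -> R),
  (forall k, z0 + \sum_e w e * pt k e = 0) -> exists lam, forall e, w e = lam * c e.

Lemma point_mx_rank : (#|T| <= \rank point_mx)%N.
Proof.
pose zc : 'rV[R]_(1 + #|T|) :=
  row_mx (- \sum_e c e * pt k0 e)%:M (\row_i c (enum_val i)).
have ker_sub : (kermx point_mx^T <= zc)%MS.
  apply/row_subP => r; have : row r (kermx point_mx^T) *m point_mx^T = 0.
    by apply/sub_kermxP; exact: row_sub.
  move: (row r _) => z /point_mx_ker z_eq; have [lam wE] := affine_eq_multiple z_eq.
  suff -> : z = lam *: zc by rewrite scalemx_sub.
  rewrite -[z]hsubmxK scale_row_mx; congr row_mx; apply/rowP => i; rewrite [RHS]mxE.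
    have := z_eq k0; under eq_bigr do rewrite wE -mulrA.
    rewrite -mulr_sumr (ord1 i) => /eqP; rewrite addr_eq0 => /eqP->.
    by rewrite !mxE eqxx mulr1n mulrN.
  by rewrite [in RHS]mxE -wE enum_valK mxE.
have := mxrankS ker_sub; rewrite mxrank_ker mxrank_tr.
have := rank_leq_row zc; lia.
Qed.

Lemma affinely_independent_points d : (d <= #|T|)%N ->
  exists y : 'I_d -> T -> R, (forall t, exists k, y t = pt k) /\
    forall mu : 'I_d -> R, \sum_t mu t = 0 -> (forall e, \sum_t mu t * y t e = 0) ->
    forall t, mu t = 0.
Proof.
move=> d_le; have d_le_rank := leq_trans d_le point_mx_rank.
pose g := maxrankfun point_mx \o widen_ord d_le_rank.
have g_free : row_free (rowsub g point_mx).
  rewrite rowsub_comp; apply: row_free_rowsub; last exact: maxrowsub_free.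
  by move=> s t /(congr1 val) /= /val_inj.
exists (fun t => pt (enum_val (g t))).
split => [t|mu mu_sum mu_pt t]; first by exists (enum_val (g t)).
have /eqP : (\row_t mu t) *m rowsub g point_mx = 0.
  apply/rowP => i; rewrite !mxE -[i]splitK; case: (split i) => [i'|e].
    by rewrite -[RHS]mu_sum; apply: eq_bigr => s _; rewrite !mxE unsplitK mxE mulr1.
  by rewrite -[RHS](mu_pt (enum_val e)); apply: eq_bigr => s _; rewrite !mxE unsplitK mxE.
by rewrite mulmx_free_eq0 // => /eqP/rowP/(_ t); rewrite !mxE.
Qed.

End AffineIndependence.

Section TightAffineHull.
Variables (R : realFieldType) (n : nat) (i1 : 'I_n).
Implicit Types (w : vec R n).

Definition lhs7_coef (e : Defs.arc n) : R :=
  if ((val e).1 == i1) || ((val e).2 == i1) then 1 else -1.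

Lemma sum_arc_indicator w (u v : 'I_n) : u != v ->
  \sum_(e : Defs.arc n) w e * (val e == (u, v))%:R = xc w u v.
Proof.
move=> uv; rewrite (xcE w uv) (bigD1 (exist _ (u, v) uv)) //= eqxx mulr1 big1 ?addr0 // => e e_uv.
suff /negPf-> : val e != (u, v) by rewrite mulr0.
by apply: contraNneq e_uv => e_uv; apply/eqP/val_inj.
Qed.

Lemma tie_rank_equations (z0 : R) w :
  (forall j a bp ba, j != i1 ->
     z0 + \sum_e w e * charvec R (rank_order (tie_rank i1 j a bp ba)) e = 0) ->
  forall j a, j != i1 -> a != i1 -> j != a ->
  xc w a i1 + xc w a j = 0 /\ xc w i1 a + xc w j a = 0.
Proof.
move=> tight j a ji1 ai1 ja.
have i1j : i1 != j by rewrite eq_sym.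
have aj : a != j by rewrite eq_sym.
have diff bp ba bp' ba' : \sum_e w e * (charvec R (rank_order (tie_rank i1 j a bp ba)) e
                                      - charvec R (rank_order (tie_rank i1 j a bp' ba')) e) = 0.
  under eq_bigr do rewrite mulrBr.
  by rewrite sumrB; move: (tight j a bp ba ji1) (tight j a bp' ba' ji1); lra.
split.
  have := diff false false true false; under eq_bigr do rewrite charvec_tie_rank_lower // mulrDr.
  by rewrite big_split !sum_arc_indicator.
have := diff false false false true; under eq_bigr do rewrite charvec_tie_rank_raise // mulrDr.
by rewrite big_split !sum_arc_indicator // eq_sym.
Qed.

Lemma tie_equations_multiple w (j1 j2 j3 : 'I_n) :
  j1 != i1 -> j2 != i1 -> j3 != i1 -> [/\ j1 != j2, j2 != j3 & j3 != j1] ->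
  (forall j a, j != i1 -> a != i1 -> j != a ->
     xc w a i1 + xc w a j = 0 /\ xc w i1 a + xc w j a = 0) ->
  forall e, w e = xc w i1 j1 * lhs7_coef e.
Proof.
move=> j1i1 j2i1 j3i1 [j12 j23 j31] eqs.
have out_in a b : a != i1 -> b != i1 -> a != b -> xc w i1 a = xc w b i1.
  move=> ai1 bi1 ab; have ba : b != a by rewrite eq_sym.
  by move: (eqs a b ai1 bi1 ab) (eqs b a bi1 ai1 ba) => [E_ab _] [_ E_ba]; lra.
set lam := xc w i1 j1.
have out_lam a : a != i1 -> xc w i1 a = lam.
  move=> ai1; have [-> //|aj1] := eqVneq a j1.
  have j13 : j1 != j3 by rewrite eq_sym.
  have [->|aj2] := eqVneq a j2; first by rewrite /lam (out_in j2 j3) // (out_in j1 j3).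
  by rewrite /lam (out_in a j2) // (out_in j1 j2).
have in_lam b : b != i1 -> xc w b i1 = lam.
  move=> bi1; have [->|bj1] := eqVneq b j1; first by rewrite -(out_in j2 j1) ?out_lam // eq_sym.
  by rewrite -(out_in j1 b) // eq_sym.
case=> [[u v] /= uv]; rewrite -(xcE w uv) /lhs7_coef /=.
case: (eqVneq u i1) uv => [-> | ui1] uv; first by rewrite mulr1 out_lam // eq_sym.
case: (eqVneq v i1) uv => [-> | vi1] uv; first by rewrite mulr1 in_lam.
have [_] := eqs u v ui1 vi1 uv; rewrite out_lam //= mulrN1; lra.
Qed.

Definition tight_label := ({j : 'I_n | j != i1} * 'I_n * bool * bool)%type.

Definition tight_point (k : tight_label) : vec R n :=
  let: (j, a, bp, ba) := k in charvec R (rank_order (tie_rank i1 (val j) a bp ba)).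

Lemma tight_point_on_facet k : P_WO (tight_point k) /\ lhs7 i1 (tight_point k) = facet_rhs R n.
Proof.
case: k => [[[[j ji1] a] bp] ba].
by split; [exact/charvec_P_WO/rank_order_weak | exact: lhs7_tie_rank].
Qed.

Lemma tight_points_affine_eq (j1 j2 j3 : 'I_n) :
  j1 != i1 -> j2 != i1 -> j3 != i1 -> [/\ j1 != j2, j2 != j3 & j3 != j1] ->
  forall z0 w, (forall k, z0 + \sum_e w e * tight_point k e = 0) ->
  exists lam, forall e, w e = lam * lhs7_coef e.
Proof.
move=> j1i1 j2i1 j3i1 distinct z0 w w_eq; exists (xc w i1 j1).
apply: (tie_equations_multiple j1i1) j2i1 j3i1 distinct _.
by apply: tie_rank_equations => j a bp ba ji1; exact: w_eq (exist _ j ji1, a, bp, ba).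
Qed.

End TightAffineHull.

Lemma card_arc (n : nat) : #|{: Defs.arc n}| = (n * (n - 1))%N.
Proof.
have diag : #|[pred p : 'I_n * 'I_n | p.1 == p.2]| = n.
  rewrite -[RHS]card_ord -(card_image (f := fun i : 'I_n => (i, i))); last by move=> i i' [].
  apply: eq_card => -[u v]; rewrite inE /=; apply/eqP/imageP => [->|[i _ [-> ->]]] //.
  by exists v.
have := cardC [pred p : 'I_n * 'I_n | p.1 == p.2]; rewrite card_prod card_ord diag.
rewrite card_sig mulnBr muln1 -(eq_card (A := [predC [pred p : 'I_n * 'I_n | p.1 == p.2]])) //.
lia.
Qed.


Theorem mainTheorem7 (R : realFieldType) (n : nat) (i1 : 'I_n) :
  (4 <= n)%N ->
  is_facet (@P_WO R n) (n * (n - 1)) (lhs7 i1)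
    (2 - ((n - 2) * (n - 3))%:R / 2).
Proof.
move=> n_ge4.
have /card_gt2P[j1 [j2 [j3 [[j1i1 j2i1 j3i1] distinct]]]] : (2 < #|predC1 i1|)%N.
  by rewrite cardC1 card_ord; lia.
rewrite !inE in j1i1 j2i1 j3i1.
pose k0 : tight_label i1 := (exist _ j1 j1i1, j2, false, false).
split; first by move=> x; exact: P_WO_lhs7_le j1i1.
split; first by exists (tight_point R k0); exact: tight_point_on_facet.
split.
  exists (charvec R (rank_order val)); split; first exact/charvec_P_WO/rank_order_weak.
  by rewrite (lhs7_strict_rank_order R j1i1 val_inj); apply/eqP; rewrite /facet_rhs; lra.
have [y [y_pt y_indep]] := affinely_independent_points k0
  (tight_points_affine_eq (R := R) j1i1 j2i1 j3i1 distinct) (eq_leq (esym (card_arc n))).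
exists y; split => // t; have [k ->] := y_pt t; exact: tight_point_on_facet.
Qed.
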